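(* Let $n\ge 1$, let $K\in\mathbb{R}^{n\times n}$ be symmetric positive semidefinite, let $\Sigma_1,\Sigma_2\in\mathbb{R}^{n\times n}$ be symmetric positive definite, and let $\lambda>1$. Let $K=PLP^T$ be an eigen-decomposition with $P$ orthogonal and $L=\mathrm{diag}(l_1,\dots,l_n)$, $l_1\ge\cdots\ge l_r>l_{r+1}=\cdots=l_n=0$, $r=\mathrm{rank}(K)$. Put $\tilde L=\mathrm{diag}(1/\sqrt{l_1},\dots,1/\sqrt{l_r},1,\dots,1)$, $\tilde K=\tilde L P^T$, $\tilde\Sigma_j=\tilde K\Sigma_j\tilde K^T$ ($j=1,2$), and write in block form (with $r\times r$ upper-left blocks) $$\tilde\Sigma_j=\begin{bmatrix}A_j&B_j\\ B_j^T&C_j\end{bmatrix},\qquad \hat\Sigma_j=A_j-B_jC_j^{-1}B_j^T,\quad j=1,2.$$ Then the optimization problem $$\max_{0\preceq K_U\preceq K}\ \log|K_U+\Sigma_1|-\lambda\log|K_U+\Sigma_2|$$ (over symmetric $n\times n$ matrices $K_U$) is equivalent to the problem $$\max_{0\preceq A_U\preceq I}\ \log|A_U+\hat\Sigma_1|-\lambda\log|A_U+\hat\Sigma_2|$$ (over symmetric $r\times r$ matrices $A_U$, $I$ the $r\times r$ identity), in the sense that $K_U$ is feasible for the first problem if and only if $\tilde K K_U\tilde K^T=\begin{bmatrix}A_U&0\\0&0\end{bmatrix}$ for some $A_U$ feasible for the second problem, and under this correspondence the two objective values differ by an additive constant independent of the variable.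
   Context: $|M|$ denotes the determinant of $M$; $M\preceq N$ means $N-M$ is positive semidefinite. The matrices $\hat\Sigma_1,\hat\Sigma_2$ are positive definite (Schur complements of positive definite matrices); when $r=n$ the blocks $B_j,C_j$ are empty and $\hat\Sigma_j=\tilde\Sigma_j$. *)

From HB Require Import structures.
From mathcomp Require Import all_boot all_order all_algebra.
From mathcomp Require Import reals exp.
Set Implicit Arguments. Unset Strict Implicit. Unset Printing Implicit Defensive.
Import Order.TTheory GRing.Theory Num.Theory.
Local Open Scope ring_scope.

Section Defs.
Variable R : realType.

Definition psd n (M : 'M[R]_n) : Prop :=
  M^T = M /\ forall x : 'cV[R]_n, 0 <= (x^T *m M *m x) 0 0.

Definition pd n (M : 'M[R]_n) : Prop :=
  M^T = M /\ forall x : 'cV[R]_n, x != 0 -> 0 < (x^T *m M *m x) 0 0.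

Definition loewner_le n (M N : 'M[R]_n) : Prop := psd (N - M).

Definition orthogonal_mx n (P : 'M[R]_n) : Prop := P *m P^T = 1%:M.

Definition objective n (lam : R) (S1 S2 X : 'M[R]_n) : R :=
  ln (\det (X + S1)) - lam * ln (\det (X + S2)).

Definition Ltilde (r s : nat) (l : 'I_(r + s) -> R) : 'M[R]_(r + s) :=
  diag_mx (\row_i (if (i < r)%N then (Num.sqrt (l i))^-1 else 1)).

Definition Ktilde (r s : nat) (l : 'I_(r + s) -> R) (P : 'M[R]_(r + s)) :=
  Ltilde l *m P^T.

Definition Sigma_hat (r s : nat) (Kt Sigma : 'M[R]_(r + s)) : 'M[R]_r :=
  let St := Kt *m Sigma *m Kt^T in
  ulsubmx St - ursubmx St *m invmx (drsubmx St) *m (ursubmx St)^T.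

End Defs.

(* Congruence by the invertible matrix [Kt = Ltilde P^T] turns [K] into
   [diag(I_r, 0)] and preserves the Loewner order, so [0 <= K_U <= K] iff
   [0 <= Kt K_U Kt^T <= diag(I_r, 0)].  The upper bound has a null quadratic
   form on the last [s] coordinates, which forces [Kt K_U Kt^T = diag(A_U, 0)]
   with [0 <= A_U <= I].  The same congruence multiplies determinants by
   [det Kt ^ 2], and the Schur complement factorisation
     [det [A_U + A_j, B_j; B_j^T, C_j] = det (A_U + Sigma_hat_j) * det C_j]
   shows that [log|K_U + Sigma_j| - log|A_U + Sigma_hat_j|] equals
   [log (det C_j / det Kt ^ 2)], independently of [K_U]. *)
From HB Require Import structures.
From mathcomp Require Import all_boot all_order all_algebra.
From mathcomp Require Import reals exp.
From mathcomp Require Import ring lra.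
Import Order.TTheory GRing.Theory Num.Theory.
Set Implicit Arguments. Unset Strict Implicit. Unset Printing Implicit Defensive.
Local Open Scope ring_scope.

Lemma quad_ge0_eq0 (R : realFieldType) (a b : R) :
  0 <= a -> (forall t, 0 <= 2 * t * b + t ^+ 2 * a) -> b = 0.
Proof.
move=> a_ge0 quad_ge0; have a1_gt0 : 0 < a + 1 by lra.
pose t := - b / (a + 1).
have bE : b = - (a + 1) * t by rewrite /t; field; rewrite gt_eqF.
have : t ^+ 2 * (a + 2) <= 0 by have := quad_ge0 t; rewrite bE; nra.
rewrite pmulr_lle0 => [t2_le0|]; last by lra.
have t0 : t = 0 by apply/eqP; rewrite -sqrf_eq0 eq_le t2_le0 sqr_ge0.
by rewrite bE t0 mulr0.
Qed.

Section PsdMatrices.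
Variable R : realType.

Lemma trmx_congr n (Q M : 'M[R]_n) : M^T = M -> (Q *m M *m Q^T)^T = Q *m M *m Q^T.
Proof. by move=> sM; rewrite !trmx_mul trmxK sM mulmxA. Qed.

Lemma quad_congr n (Q M : 'M[R]_n) (x : 'cV[R]_n) :
  x^T *m (Q *m M *m Q^T) *m x = (Q^T *m x)^T *m M *m (Q^T *m x).
Proof. by rewrite !trmx_mul trmxK !mulmxA. Qed.

Lemma psd_congr n (Q M : 'M[R]_n) : psd M -> psd (Q *m M *m Q^T).
Proof. by case=> sM qM; split; [exact: trmx_congr | move=> x; rewrite quad_congr]. Qed.

Lemma pd_congr n (Q M : 'M[R]_n) : Q \in unitmx -> pd M -> pd (Q *m M *m Q^T).
Proof.
move=> uQ [sM qM]; split=> [|x x_neq0]; first exact: trmx_congr.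
rewrite quad_congr; apply: qM; apply: contra x_neq0 => /eqP QTx0.
have uQT : Q^T \in unitmx by rewrite unitmx_tr.
by rewrite -[x](mulKmx uQT) QTx0 mulmx0.
Qed.

Lemma congr_invK n (Q X : 'M[R]_n) : Q \in unitmx ->
  invmx Q *m (Q *m X *m Q^T) *m (invmx Q)^T = X.
Proof.
move=> uQ; rewrite trmx_inv !mulmxA mulVmx // mul1mx -mulmxA.
by rewrite mulmxV ?unitmx_tr // mulmx1.
Qed.

Lemma psd_loewner_congr n (Q X Y : 'M[R]_n) : Q \in unitmx ->
  psd X /\ loewner_le X Y <->
  psd (Q *m X *m Q^T) /\ loewner_le (Q *m X *m Q^T) (Q *m Y *m Q^T).
Proof.
move=> uQ; rewrite /loewner_le -mulmxBl -mulmxBr.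
split=> [[psdX psdYX] | [psdQX psdQYX]]; first by split; exact: psd_congr.
by split; [rewrite -(congr_invK X uQ) | rewrite -(congr_invK (Y - X) uQ)];
  exact: psd_congr.
Qed.

Lemma psd_pd_add n (A B : 'M[R]_n) : psd A -> pd B -> pd (A + B).
Proof.
move=> [sA qA] [sB qB]; split=> [|x x_neq0].
  by rewrite [(A + B)^T]linearD /= sA sB.
by rewrite mulmxDr mulmxDl mxE; exact: ltr_wpDl (qA x) (qB x x_neq0).
Qed.

(* [q (x + t e) = 2 t (e^T M x) + t^2 q e >= 0] for every [t] forces the
   polar term [e^T M x] to vanish. *)
Lemma psd_quad_eq0 n (M : 'M[R]_n) (x : 'cV[R]_n) :
  psd M -> (x^T *m M *m x) 0 0 = 0 -> M *m x = 0.
Proof.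
move=> [sM qM] qx0; apply/matrixP => i j; rewrite (ord1 j) [RHS]mxE.
pose e : 'cV[R]_n := delta_mx i 0.
have polarE : (e^T *m M *m x) 0 0 = (M *m x) i 0.
  by rewrite trmx_delta -mulmxA -rowE mxE.
have polarC : (x^T *m M *m e) 0 0 = (e^T *m M *m x) 0 0.
  have -> : e^T *m M *m x = (x^T *m M *m e)^T by rewrite !trmx_mul trmxK sM mulmxA.
  by rewrite [RHS]mxE.
rewrite -polarE; apply: (quad_ge0_eq0 (a := (e^T *m M *m e) 0 0)) => // t.
have := qM (x + t *: e).
rewrite [(x + _)^T]linearD /= [(_ *: e)^T]linearZ /= !mulmxDl !mulmxDr.
rewrite -!scalemxAl -!scalemxAr.
move: qx0 polarC; set qxx := x^T *m M *m x; set qxe := x^T *m M *m e.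
set qex := e^T *m M *m x; set qee := e^T *m M *m e.
by clearbody qxx qxe qex qee => qx0 polarC; rewrite !mxE qx0 polarC; lra.
Qed.

Lemma mulmx_cV_eq0 m n (B : 'M[R]_(m, n)) :
  (forall v : 'cV[R]_n, B *m v = 0) -> B = 0.
Proof.
move=> Bv0; apply/matrixP => i j; have := Bv0 (delta_mx j 0).
by rewrite -colE => /matrixP /(_ i 0); rewrite !mxE.
Qed.

Section Blocks.
Variables m1 m2 : nat.
Implicit Types (A : 'M[R]_m1) (B : 'M[R]_(m1, m2)) (C : 'M[R]_(m2, m1)) (D : 'M[R]_m2).

Lemma quad_block_mx A B C D (u : 'cV[R]_m1) (v : 'cV[R]_m2) :
  (col_mx u v)^T *m block_mx A B C D *m col_mx u v =
  u^T *m A *m u + u^T *m B *m v + (v^T *m C *m u + v^T *m D *m v).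
Proof.
rewrite tr_col_mx mul_row_block mul_row_col !mulmxDl.
by rewrite -!addrA; congr (_ + _); rewrite addrCA.
Qed.

Lemma sym_block_mx A B C D :
  (block_mx A B C D)^T = block_mx A B C D -> [/\ A^T = A, C = B^T & D^T = D].
Proof. by rewrite tr_block_mx => /eq_block_mx [-> _ <- ->]. Qed.

Lemma pd_block_mx_diag A B C D : pd (block_mx A B C D) -> pd A /\ pd D.
Proof.
move=> [sM qM]; have [sA _ sD] := sym_block_mx sM.
split; split=> // x x_neq0.
  have x0_neq0 : col_mx x (0 : 'cV_m2) != 0.
    by apply: contra x_neq0 => /eqP; rewrite -col_mx0 => /eq_col_mx [-> _].
  have := qM _ x0_neq0.
  by rewrite quad_block_mx !mulmx0 trmx0 !mul0mx !addr0.
have x0_neq0 : col_mx (0 : 'cV_m1) x != 0.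
  by apply: contra x_neq0 => /eqP; rewrite -col_mx0 => /eq_col_mx [_ ->].
have := qM _ x0_neq0.
by rewrite quad_block_mx !mulmx0 trmx0 !mul0mx !add0r.
Qed.

Lemma block_mx_schur_ul A B C D : A \in unitmx ->
  block_mx A B C D = block_mx 1%:M 0 (C *m invmx A) 1%:M *m
    block_mx A 0 0 (D - C *m invmx A *m B) *m block_mx 1%:M (invmx A *m B) 0 1%:M.
Proof.
move=> uA; rewrite !mulmx_block !mulmx0 !mul0mx !mulmx1 !mul1mx !addr0 !add0r.
rewrite mulmxA mulmxV // mul1mx -!mulmxA mulVmx // mulmx1.
by rewrite mulKmx // addrC subrK.
Qed.

Lemma block_mx_schur_dr A B C D : D \in unitmx ->
  block_mx A B C D = block_mx 1%:M (B *m invmx D) 0 1%:M *m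
    block_mx (A - B *m invmx D *m C) 0 0 D *m block_mx 1%:M 0 (invmx D *m C) 1%:M.
Proof.
move=> uD; rewrite !mulmx_block !mulmx0 !mul0mx !mulmx1 !mul1mx !addr0 !add0r.
by rewrite mulmxKV // mulKVmx // mulmxA subrK.
Qed.

Lemma det_block_mx_schur_dr A B C D : D \in unitmx ->
  \det (block_mx A B C D) = \det (A - B *m invmx D *m C) * \det D.
Proof.
move=> uD; rewrite (block_mx_schur_dr _ _ _ uD) !det_mulmx.
by rewrite !det_ublock det_lblock !det1 !mulr1 mul1r.
Qed.

Lemma det_block_mx_schur_ul A B C D : A \in unitmx ->
  \det (block_mx A B C D) = \det A * \det (D - C *m invmx A *m B).
Proof.
move=> uA; rewrite (block_mx_schur_ul _ _ _ uA) !det_mulmx.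
by rewrite det_lblock !det_ublock !det1 !mulr1 mul1r.
Qed.

Lemma pd_schur_ul A B C D : A \in unitmx ->
  pd (block_mx A B C D) -> pd (D - C *m invmx A *m B).
Proof.
move=> uA pdM; have [sA CE _] := sym_block_mx pdM.1.
pose L := block_mx (1%:M : 'M[R]_m1) 0 (C *m invmx A) (1%:M : 'M[R]_m2).
have LT : L^T = block_mx 1%:M (invmx A *m B) 0 1%:M.
  by rewrite tr_block_mx !trmx1 !trmx0 trmx_mul trmx_inv sA CE trmxK.
have uL : L \in unitmx by rewrite unitmxE det_lblock !det1 mulr1 unitr1.
have uLV : invmx L \in unitmx by rewrite unitmx_inv.
rewrite (block_mx_schur_ul _ _ _ uA) -/L -LT in pdM.
have := pd_congr uLV pdM; rewrite congr_invK //.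
by case/pd_block_mx_diag.
Qed.

Lemma psd_block_mx0 A : psd (block_mx A 0 0 (0 : 'M_m2)) <-> psd A.
Proof.
split=> [[sM qM] | [sA qA]].
  have [sA _ _] := sym_block_mx sM; split=> // u.
  by have := qM (col_mx u 0); rewrite quad_block_mx !mulmx0 ?trmx0 !mul0mx !addr0.
split=> [|x]; first by rewrite tr_block_mx !trmx0 sA.
by rewrite -[x]vsubmxK quad_block_mx !mulmx0 !mul0mx !addr0.
Qed.

(* The upper bound [block_mx E 0 0 0] has a null quadratic form on vectors
   [col_mx 0 v], so the sandwiched [M] must vanish there as well. *)
Lemma psd_le_block_mx0 (E : 'M[R]_m1) (M : 'M[R]_(m1 + m2)) :
  psd M /\ loewner_le M (block_mx E 0 0 0) <->
  exists A, (psd A /\ loewner_le A E) /\ M = block_mx A 0 0 0.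
Proof.
rewrite /loewner_le; split=> [[psdM psdEM] | [A [[psdA psdEA] ->]]]; last first.
  rewrite opp_block_mx add_block_mx !oppr0 !addr0.
  by split; apply/psd_block_mx0.
have M_ker (v : 'cV[R]_m2) : M *m col_mx 0 v = 0.
  apply: psd_quad_eq0 => //; apply/eqP; rewrite eq_le psdM.2 andbT.
  have := psdEM.2 (col_mx 0 v).
  rewrite mulmxBr mulmxBl -mulmxA mul_block_col !mulmx0 !mul0mx !addr0 col_mx0.
  by rewrite mulmx0 sub0r mxE oppr_ge0.
rewrite -[M]submxK in psdM psdEM M_ker *.
have [_ CE _] := sym_block_mx psdM.1.
have [B0 D0] : ursubmx M = 0 /\ drsubmx M = 0.
  split; apply: mulmx_cV_eq0 => v; have := M_ker v;
    by rewrite mul_block_col !mulmx0 !add0r -col_mx0 => /eq_col_mx [].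
rewrite CE B0 D0 trmx0 in psdM psdEM *.
exists (ulsubmx M); split=> //; split; first exact/psd_block_mx0.
by move: psdEM; rewrite opp_block_mx add_block_mx !oppr0 !addr0 => /psd_block_mx0.
Qed.
End Blocks.

Lemma pd_det_gt0 n (M : 'M[R]_n) : pd M -> 0 < \det M.
Proof.
elim: n M => [|n IHn] M pdM; first by rewrite det_mx00.
move: M pdM; change n.+1 with (1 + n)%N => M pdM.
rewrite -[M]submxK in pdM *.
have [[_ qA] _] := pd_block_mx_diag pdM.
have A_gt0 : 0 < ulsubmx M 0 0.
  by have := qA 1%:M (oner_neq0 _); rewrite trmx1 mul1mx mulmx1.
have uA : ulsubmx M \in unitmx by rewrite unitmxE det_mx11 unitfE gt_eqF.
rewrite det_block_mx_schur_ul // det_mx11 mulr_gt0 // IHn //.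
exact: pd_schur_ul.
Qed.

Lemma det_add_schur r s (T S X : 'M[R]_(r + s)) (A : 'M[R]_r) :
  S^T = S -> drsubmx (T *m S *m T^T) \in unitmx ->
  T *m X *m T^T = block_mx A 0 0 0 ->
  \det T ^+ 2 * \det (X + S) =
  \det (A + Sigma_hat T S) * \det (drsubmx (T *m S *m T^T)).
Proof.
move=> sS uD TXT; have sSt := trmx_congr T sS.
rewrite /Sigma_hat; set St := T *m S *m T^T in sSt uD *.
have CE : dlsubmx St = (ursubmx St)^T by rewrite trmx_ursub sSt.
have : T *m (X + S) *m T^T =
    block_mx (A + ulsubmx St) (ursubmx St) (dlsubmx St) (drsubmx St).
  by rewrite mulmxDr mulmxDl TXT -/St -{1}[St]submxK add_block_mx !add0r.
move/(congr1 determinant); rewrite !det_mulmx det_tr det_block_mx_schur_dr // CE.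
by rewrite addrA => <-; rewrite expr2 mulrAC.
Qed.

Lemma ln_det_add_schur r s (T S X : 'M[R]_(r + s)) (A : 'M[R]_r) :
  T \in unitmx -> pd S -> psd X -> T *m X *m T^T = block_mx A 0 0 0 ->
  ln (\det (X + S)) = ln (\det (A + Sigma_hat T S)) +
    ln (\det (drsubmx (T *m S *m T^T)) / \det T ^+ 2).
Proof.
move=> uT pdS psdX TXT.
have := pd_congr uT pdS; rewrite -{1}[_ *m _ *m _]submxK => /pd_block_mx_diag [_ pdD].
have D_gt0 := pd_det_gt0 pdD.
have T2_gt0 : 0 < \det T ^+ 2.
  by rewrite lt_def sqrf_eq0 sqr_ge0 andbT -unitfE -unitmxE.
have uD : drsubmx (T *m S *m T^T) \in unitmx by rewrite unitmxE unitfE gt_eqF.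
have detXS : \det (X + S) = \det (A + Sigma_hat T S) *
    (\det (drsubmx (T *m S *m T^T)) / \det T ^+ 2).
  apply: (mulfI (lt0r_neq0 T2_gt0)); rewrite (det_add_schur pdS.1 uD TXT).
  by field; rewrite -sqrf_eq0 lt0r_neq0.
have Q_gt0 : 0 < \det (drsubmx (T *m S *m T^T)) / \det T ^+ 2 by rewrite divr_gt0.
have AS_gt0 : 0 < \det (A + Sigma_hat T S).
  by rewrite -(pmulr_lgt0 _ Q_gt0) -detXS; exact/pd_det_gt0/psd_pd_add.
by rewrite detXS lnM ?posrE.
Qed.

End PsdMatrices.

Section Whitening.
Variables (R : realType) (r s : nat) (l : 'I_(r + s) -> R) (P : 'M[R]_(r + s)).
Hypothesis l_gt0 : forall i : 'I_(r + s), (i < r)%N -> 0 < l i.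
Hypothesis l_eq0 : forall i : 'I_(r + s), (r <= i)%N -> l i = 0.
Hypothesis P_orth : orthogonal_mx P.

Lemma Ltilde_unit : Ltilde l \in unitmx.
Proof.
rewrite unitmxE det_diag unitfE; apply/prodf_neq0 => i _; rewrite mxE.
by case: ifP => [/l_gt0 li_gt0 | _]; rewrite ?invr_eq0 ?sqrtr_eq0 -?ltNge ?oner_neq0.
Qed.

Lemma Ktilde_unit : Ktilde l P \in unitmx.
Proof. by rewrite unitmx_mul Ltilde_unit unitmx_tr (mulmx1_unit P_orth).1. Qed.

Lemma Ltilde_diag_Ltilde : Ltilde l *m diag_mx (\row_i l i) *m Ltilde l = pid_mx r.
Proof.
rewrite !mulmx_diag; apply/matrixP => i j; rewrite !mxE eqE /=.
case: (i =P j :> nat) => [/val_inj -> | _] /=; last by rewrite mulr0n.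
rewrite mulr1n; case: ifP => [/l_gt0 lj_gt0 | j_ge_r].
  have ljE : l j = Num.sqrt (l j) ^+ 2 by rewrite sqr_sqrtr // ltW.
  have sqrt_neq0 : Num.sqrt (l j) != 0 by rewrite sqrtr_eq0 -ltNge.
  move: sqrt_neq0 ljE; set q := Num.sqrt (l j) => q_neq0 ->.
  by rewrite mulr1n; field.
by rewrite l_eq0 ?mulr0 ?mul0r // leqNgt j_ge_r.
Qed.

Lemma Ktilde_congr_eigen :
  Ktilde l P *m (P *m diag_mx (\row_i l i) *m P^T) *m (Ktilde l P)^T =
  block_mx 1%:M 0 0 0.
Proof.
rewrite /Ktilde trmx_mul trmxK /Ltilde tr_diag_mx -pid_mx_block -Ltilde_diag_Ltilde.
have PTP : P^T *m P = 1%:M := mulmx1C P_orth.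
by rewrite !mulmxA -(mulmxA _ P^T P) PTP mulmx1 -(mulmxA _ P^T P) PTP mulmx1.
Qed.

End Whitening.

Theorem proposition1 (R : realType) (r s : nat) (K Sigma1 Sigma2 P : 'M[R]_(r + s))
    (l : 'I_(r + s) -> R) (lam : R) :
  (0 < r + s)%N ->
  psd K -> pd Sigma1 -> pd Sigma2 -> 1 < lam ->
  orthogonal_mx P ->
  K = P *m diag_mx (\row_i l i) *m P^T ->
  (forall i j : 'I_(r + s), (i <= j)%N -> l j <= l i) ->
  (forall i : 'I_(r + s), (i < r)%N -> 0 < l i) ->
  (forall i : 'I_(r + s), (r <= i)%N -> l i = 0) ->
  let Kt := Ktilde l P in
  let S1 := Sigma_hat Kt Sigma1 in
  let S2 := Sigma_hat Kt Sigma2 in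
  let feas1 := fun KU : 'M[R]_(r + s) => psd KU /\ loewner_le KU K in
  let feas2 := fun AU : 'M[R]_r => psd AU /\ loewner_le AU 1%:M in
  (forall KU : 'M[R]_(r + s),
     feas1 KU <->
     exists AU : 'M[R]_r, feas2 AU /\ Kt *m KU *m Kt^T = block_mx AU 0 0 0) /\
  (exists c : R, forall (KU : 'M[R]_(r + s)) (AU : 'M[R]_r),
     feas1 KU -> feas2 AU -> Kt *m KU *m Kt^T = block_mx AU 0 0 0 ->
     objective lam Sigma1 Sigma2 KU = objective lam S1 S2 AU + c).
Proof.
move=> _ _ pdS1 pdS2 _ P_orth KE _ l_gt0 l_eq0 Kt S1 S2 feas1 feas2.
have uKt : Kt \in unitmx := Ktilde_unit l_gt0 P_orth.
have KtK : Kt *m K *m Kt^T = block_mx 1%:M 0 0 0.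
  by rewrite KE; exact: Ktilde_congr_eigen.
split=> [KU|].
  apply: iff_trans (psd_loewner_congr _ _ uKt) _.
  by rewrite KtK; exact: psd_le_block_mx0.
exists (ln (\det (drsubmx (Kt *m Sigma1 *m Kt^T)) / \det Kt ^+ 2) -
        lam * ln (\det (drsubmx (Kt *m Sigma2 *m Kt^T)) / \det Kt ^+ 2)).
move=> KU AU [psdKU _] _ KtKU.
rewrite /objective (ln_det_add_schur uKt pdS1 psdKU KtKU).
by rewrite (ln_det_add_schur uKt pdS2 psdKU KtKU); ring.
Qed.
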